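(* Let $\mathcal{T}$ be a tower with $\mathbb{K}_0=\emptyset$ whose maps are elementary inclusions or elementary contractions, of dimension $\Delta$, with $n$ elementary inclusions, and let $\mathcal{W}$ be its contracting forest. If $N$ is an independent set of nodes of $\mathcal{W}$, then $\sum_{x\in N}|E(x)|\le(\Delta+1)\cdot n$.
   Context: Elementary inclusion: $\mathbb{K}_{i+1}=\mathbb{K}_i\cup\{\sigma\}$; elementary contraction of distinct vertices $u,v$: one of them disappears, both are mapped to the other, identity elsewhere. Dimension of the tower = maximal simplex dimension. Contracting forest: $\mathcal{W}_0=\emptyset$; if $\phi_{j-1}$ includes a simplex of dimension $>0$, $\mathcal{W}_j=\mathcal{W}_{j-1}$; if it includes a vertex $w$, $\mathcal{W}_j$ is $\mathcal{W}_{j-1}$ plus a new single-node tree labeled $w$; if it contracts $u$ and $v$, the two trees of $\mathcal{W}_{j-1}$ whose roots are labeled $u$ and $v$ are merged by making their roots the two children of a new root labeled with the image vertex. (The roots of $\mathcal{W}_j$ correspond bijectively to the vertices of $\mathbb{K}_j$.) $\mathcal{W}=\mathcal{W}_m$. Let $\Sigma$ be the collection of the $n$ simplices added at elementary inclusions; for $\sigma\in\Sigma$ added by $\phi_i$, each vertex of $\sigma$ is the label of a root of $\mathcal{W}_{i+1}$, hence corresponds to a node of $\mathcal{W}$. For a node $x$, $E(x)\subseteq\Sigma$ is the set of those $\sigma$ having at least one vertex whose corresponding node lies in the subtree of $\mathcal{W}$ rooted at $x$. A set of nodes is independent if no node in it is a proper ancestor of another. *)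

From HB Require Import structures.
From mathcomp Require Import all_boot.
From mathcomp Require Import finmap.
Set Implicit Arguments. Unset Strict Implicit. Unset Printing Implicit Defensive.
Local Open Scope fset_scope.

(* Vertices are natural numbers; a simplex is a nonempty finite set of
   vertices; a complex is a finite set of simplices. *)
Definition simplex := {fset nat}.
Definition complex := {fset {fset nat}}.

(* Elementary maps of a tower.
   - Incl s    : elementary inclusion K_{i+1} = K_i ∪ {s}.
   - Contr u v : elementary contraction of the distinct vertices u and v,
                 u disappears, both u and v are mapped to v (identity elsewhere).
                 (Contracting "v into u" is Contr v u.) *)
Inductive op := Incl of simplex | Contr of nat & nat.

Definition cmap (u v : nat) (x : nat) : nat := if x == u then v else x.

Definition step (K : complex) (o : op) : complex :=
  match o with
  | Incl s => s |` K
  | Contr u v => [fset [fset cmap u v x | x in s] | s : {fset nat} in K]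
  end.

Definition cplx (T : seq op) (i : nat) : complex := foldl step fset0 (take i T).

Definition nth_op (T : seq op) (i : nat) : op := nth (Incl fset0) T i.

(* Validity of each elementary map (K_{i+1} is again a simplicial complex and
   the map is genuinely elementary). *)
Definition valid_step (K : complex) (o : op) : Prop :=
  match o with
  | Incl s => [/\ s != fset0, s \notin K &
                  forall t : {fset nat}, t != fset0 -> t `<` s -> t \in K]
  | Contr u v => [/\ u != v, [fset u] \in K & [fset v] \in K]
  end.

Definition tower (T : seq op) : Prop :=
  forall i, i < size T -> valid_step (cplx T i) (nth_op T i).

Definition tower_dim (T : seq op) : nat :=
  \max_(i < (size T).+1) \max_(s <- cplx T i) (#|` s|).-1.

Definition isIncl (o : op) : bool := if o is Incl _ then true else false.

(* ---- contracting forest ----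
   Nodes of W are identified with the indices j of the maps phi_j that create
   them: a vertex inclusion creates a leaf, a contraction creates an internal
   node.  [creates T j w]: phi_j creates a node labeled w. *)
Definition creates (T : seq op) (j w : nat) : bool :=
  (j < size T) &&
  match nth_op T j with
  | Incl s => s == [fset w]
  | Contr _ v => v == w
  end.

Definition isNode (T : seq op) (j : nat) : bool :=
  (j < size T) &&
  match nth_op T j with
  | Incl s => #|` s| == 1
  | Contr _ _ => true
  end.

(* The root of W_j labeled w: the most recently created node (before j)
   carrying the label w. *)
Fixpoint rootAt (T : seq op) (j w : nat) : option nat :=
  match j with
  | 0 => None
  | j'.+1 => if creates T j' w then Some j' else rootAt T j' w
  end.

(* c is a child of p in W *)
Definition parent (T : seq op) (c p : nat) : bool :=
  (p < size T) &&
  match nth_op T p with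
  | Contr u v => (rootAt T p u == Some c) || (rootAt T p v == Some c)
  | Incl _ => false
  end.

Fixpoint in_sub_fuel (k : nat) (T : seq op) (x y : nat) : bool :=
  (y == x) ||
  (if k is k'.+1 then
     has (fun p => parent T y p && in_sub_fuel k' T x p) (iota 0 (size T))
   else false).

(* y lies in the subtree of W rooted at x.  Parents have strictly larger
   indices (< size T), so size T steps suffice. *)
Definition in_subtree (T : seq op) (x y : nat) : bool :=
  in_sub_fuel (size T) T x y.

(* sigma added by phi_i is in E(x): some vertex of sigma has its
   corresponding node (root of W_{i+1} with that label) in the subtree of x. *)
Definition inE (T : seq op) (x i : nat) : bool :=
  (i < size T) &&
  match nth_op T i with
  | Incl s => has (fun v => if rootAt T i.+1 v is Some y then in_subtree T x y
                            else false) s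
  | Contr _ _ => false
  end.

(* |E(x)|, the simplices of Sigma being indexed by their inclusion step *)
Definition E_size (T : seq op) (x : nat) : nat := count (inE T x) (iota 0 (size T)).

Definition independent (T : seq op) (N : seq nat) : Prop :=
  [/\ all (isNode T) N, uniq N &
      forall x y, x \in N -> y \in N -> x != y -> ~~ in_subtree T x y].

From Pilot Require Import Defs.
From HB Require Import structures.
From mathcomp Require Import all_boot.
From mathcomp Require Import finmap.
Set Implicit Arguments. Unset Strict Implicit.
Local Open Scope fset_scope.

(* Every vertex of K_j labels a root of W_j, and a node stays a root until the
   contraction that merges it; so no node acquires two parents and W is a
   forest.  The ancestors of a node therefore form a chain, and an independent
   set N contains at most one ancestor of any given node.  A simplex sigma
   added at an inclusion thus lies in E(x) for at most one x in N per vertex of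
   sigma, i.e. for at most |sigma| <= Delta + 1 nodes of N; summing over the n
   inclusions gives the bound. *)

Lemma count_sumE (X : Type) (a : pred X) (r : seq X) :
  count a r = \sum_(x <- r) a x.
Proof. by elim: r => [|x r IH] /=; rewrite ?big_nil ?big_cons ?IH. Qed.

Lemma count_has_le_sum (X V : Type) (Q : X -> V -> bool) (A : seq V) (r : seq X) :
  count (fun x => has (Q x) A) r <= \sum_(v <- A) count (Q^~ v) r.
Proof.
elim: A => [|v A IH] /=; first by rewrite big_nil; elim: r.
rewrite big_cons; apply: leq_trans _ (leq_add (leqnn _) IH).
by rewrite -(count_predUI (Q^~ v)) leq_addr.
Qed.

Lemma count_le1_mutex (X : eqType) (P : pred X) (r : seq X) : uniq r ->
  {in r &, forall x y, x != y -> ~~ (P x && P y)} -> count P r <= 1.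
Proof.
move=> r_uniq mutex; rewrite -size_filter.
have Pr_uniq : uniq (filter P r) by exact: filter_uniq.
case Er: (filter P r) Pr_uniq => [|x [|y s]] //=.
rewrite inE negb_or => /andP[/andP[xy _] _].
have : x \in filter P r /\ y \in filter P r by rewrite Er !inE !eqxx ?orbT.
rewrite !mem_filter => -[/andP[Px xr] /andP[Py yr]].
by have := mutex x y xr yr xy; rewrite Px Py.
Qed.

Section ContractingForest.

Variable T : seq op.

Lemma cplxS j : j < size T -> cplx T j.+1 = step (cplx T j) (nth_op T j).
Proof. by move=> j_lt; rewrite /cplx (take_nth (Incl fset0) j_lt) -cats1 foldl_cat. Qed.

Lemma size_incl_le_dim i s :
  i < size T -> nth_op T i = Incl s -> #|` s| <= (tower_dim T).+1.
Proof.
move=> i_lt Ei.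
have s_in : s \in cplx T i.+1 by rewrite cplxS // Ei /= in_fset1U eqxx.
apply: leq_trans (leqSpred _) _; rewrite ltnS.
have i_ord : i.+1 < (size T).+1 by [].
apply: leq_trans (leq_bigmax_cond
  (F := fun j : 'I_(size T).+1 => \max_(t <- cplx T j) (#|` t|).-1) (Ordinal i_ord) isT).
exact: (leq_bigmax_seq (F := fun t : {fset nat} => (#|` t|).-1)).
Qed.

Lemma rootAt_creates j w c : rootAt T j w = Some c -> c < j /\ creates T c w.
Proof.
elim: j => [|j IH] //=.
case: ifP => [_ [<-] // | _ /IH[c_lt c_creates]].
by split=> //; apply: ltnW.
Qed.

Lemma creates_label_uniq c a b : creates T c a -> creates T c b -> a = b.
Proof.
move=> /andP[_ ca] /andP[_]; move: ca.
case: (nth_op T c) => [s|u v] /eqP-> /eqP // /fsetP/(_ a).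
by rewrite !in_fset1 eqxx => /esym/eqP.
Qed.

Lemma rootAt_label_uniq j j' a b c :
  rootAt T j a = Some c -> rootAt T j' b = Some c -> a = b.
Proof.
by move=> /rootAt_creates[_ ca] /rootAt_creates[_ cb]; apply: creates_label_uniq ca cb.
Qed.

Lemma parent_lt c p : parent T c p -> c < p.
Proof.
case/andP=> _; case: (nth_op T p) => // u v.
by case/orP=> /eqP/rootAt_creates[].
Qed.

Definition is_root j c := forall p, p < j -> ~~ parent T c p.

Lemma is_root_last j : is_root j.+1 j.
Proof. by move=> p; rewrite ltnS => pj; apply/negP => /parent_lt; rewrite ltnNge pj. Qed.

Lemma is_rootS j c : is_root j c -> ~~ parent T c j -> is_root j.+1 c.
Proof. by move=> c_root npar p; rewrite ltnS leq_eqVlt => /orP[/eqP-> | /c_root]. Qed.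

Lemma mem_contr_vertex (K : complex) u v w : u != v ->
  [fset w] \in step K (Contr u v) -> w != u /\ (w = v \/ [fset w] \in K).
Proof.
move=> uv /imfsetP[s /= sK Es].
have /imfsetP[x /= xs Ew] : w \in [fset cmap u v x | x in s] by rewrite -Es in_fset1.
have s_w y : y \in s -> cmap u v y = w.
  by move=> ys; apply/fset1P; rewrite Es; apply/imfsetP; exists y.
move: Ew; rewrite /cmap; case: (x =P u) => [_ -> | /eqP xu Ew].
  by split; [rewrite eq_sym | left].
subst w; split=> //; case: (x =P v) => [-> | xv]; [by left | right].
suff <- : s = [fset x] by [].
apply/fsetP => y; rewrite in_fset1; apply/idP/eqP => [ys | -> //].
by move: (s_w y ys); rewrite /cmap; case: ifP => // _ vx; rewrite vx in xv.
Qed.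

Hypothesis towerT : tower T.

Lemma vertex_rootAt j w : j <= size T -> [fset w] \in cplx T j ->
  exists2 c, rootAt T j w = Some c & is_root j c.
Proof.
elim: j => [|j IH] j_le; first by rewrite /cplx take0.
have j_lt : j < size T by [].
case created: (creates T j w) => w_in.
  by exists j; [rewrite /= created | exact: is_root_last].
suff [w_old old_root] : [fset w] \in cplx T j /\
    forall c, rootAt T j w = Some c -> ~~ parent T c j.
  have [c root_w c_root] := IH (ltnW j_le) w_old.
  by exists c; [rewrite /= created | apply: is_rootS (old_root c root_w)].
move: created (towerT j_lt) w_in; rewrite /creates /parent j_lt cplxS //.
case: (nth_op T j) => [s|u v] /= created.
  by move=> _; rewrite in_fset1U eq_sym created.
case=> uv _ _ /(mem_contr_vertex uv)[wu [wv | w_old]]; first by rewrite wv eqxx in created.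
split=> // c root_w; apply/negP => /orP[] /eqP /(rootAt_label_uniq root_w) /eqP.
  by rewrite (negbTE wu).
by rewrite eq_sym created.
Qed.

Lemma parent_is_root c p : parent T c p -> is_root p c.
Proof.
case/andP=> p_lt; have := towerT p_lt.
have vertex_root w : [fset w] \in cplx T p -> rootAt T p w = Some c -> is_root p c.
  by move=> /(vertex_rootAt (ltnW p_lt))[c' -> c'_root] [<-].
by case: (nth_op T p) => // u v [_ u_in v_in] /orP[] /eqP; apply: vertex_root.
Qed.

Lemma parent_uniq c p1 p2 : parent T c p1 -> parent T c p2 -> p1 = p2.
Proof.
wlog p12 : p1 p2 / p1 <= p2 => [sym | ].
  by case: (leqP p1 p2) => [|/ltnW] p12 par1 par2; [|symmetry]; apply: sym.
move=> par1 /parent_is_root c_root; apply/eqP; rewrite eqn_leq p12 leqNgt /=.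
by apply: contraL par1 => /c_root.
Qed.

Lemma in_sub_fuelS k x y : in_sub_fuel k T x y -> in_sub_fuel k.+1 T x y.
Proof.
elim: k y => [|k IH] y /=; first by rewrite orbF => ->.
case/orP=> [-> // | /hasP[p p_in /andP[par sub]]].
by apply/orP; right; apply/hasP; exists p; rewrite // par; apply: IH.
Qed.

(* Ancestors are comparable because each node has at most one parent. *)
Lemma in_sub_fuel_total k k' x x' y :
  in_sub_fuel k T x y -> in_sub_fuel k' T x' y ->
  in_sub_fuel k' T x' x || in_sub_fuel k T x x'.
Proof.
elim: k k' y => [|k IH] k' y; first by rewrite /= orbF => /eqP-> ->.
case/orP=> [/eqP-> -> // | /hasP[p p_in /andP[par sub]]].
case: k' => [|k'].
  case/orP=> [/eqP <- | //]; apply/orP; right; apply/orP; right.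
  by apply/hasP; exists p; rewrite ?par.
case/orP=> [/eqP <- | /hasP[p' _ /andP[par' sub']]].
  by apply/orP; right; apply/orP; right; apply/hasP; exists p; rewrite ?par.
rewrite -(parent_uniq par par') in sub'.
by case/orP: (IH k' p sub sub') => /in_sub_fuelS ->; rewrite ?orbT.
Qed.

Lemma count_ancestors_le1 N y : independent T N -> count (in_subtree T ^~ y) N <= 1.
Proof.
case=> _ N_uniq N_indep; apply: count_le1_mutex => // x x' x_in x'_in xx'.
apply/negP => /andP[sub sub']; case/orP: (in_sub_fuel_total sub sub').
  by apply/negP; apply: N_indep; rewrite // eq_sym.
by apply/negP; apply: N_indep.
Qed.

Lemma count_inE_le N i : independent T N ->
  count (Defs.inE T ^~ i) N <= (tower_dim T).+1 * isIncl (nth_op T i).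
Proof.
move=> N_indep; rewrite /Defs.inE.
case: (ltnP i (size T)) => [i_lt | _]; last by rewrite (eq_count (a2 := pred0)) ?count_pred0.
case Ei: (nth_op T i) => [s|u v]; last by rewrite (eq_count (a2 := pred0)) ?count_pred0.
rewrite [isIncl _]/= muln1; apply: leq_trans (size_incl_le_dim i_lt Ei).
apply: leq_trans (count_has_le_sum _ _ _) _.
rewrite -sum1_size; apply: leq_sum => v _.
case: (rootAt T i.+1 v) => [y|]; first exact: count_ancestors_le1.
by rewrite (eq_count (a2 := pred0)) ?count_pred0.
Qed.

End ContractingForest.

Theorem lemma7 (T : seq op) (Delta n : nat) (N : seq nat) :
  tower T ->
  Delta = tower_dim T ->
  n = count isIncl T ->
  independent T N ->
  \sum_(x <- N) E_size T x <= Delta.+1 * n.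
Proof.
move=> towerT -> -> N_indep.
have -> : count isIncl T = \sum_(i <- iota 0 (size T)) isIncl (nth_op T i).
  by rewrite -count_sumE -{1}(mkseq_nth (Incl fset0) T) count_map.
rewrite /E_size; under eq_bigr do rewrite count_sumE.
rewrite exchange_big /= big_distrr /=; apply: leq_sum => i _.
by rewrite -count_sumE; apply: count_inE_le.
Qed.
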